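(* For every $N>1$ there exist connected graphs $H\subsetneq G$ ($H$ a proper subgraph of $G$) with $\chi(H)=\chi(G)$ satisfying $N\,\mathrm{sn}(H)<\mathrm{sn}(G)$. The same holds with $\underline{\mathrm{lcs}}$ in place of $\mathrm{sn}$: for every $N>1$ there exist such $H\subsetneq G$ with $N\,\underline{\mathrm{lcs}}(H)<\underline{\mathrm{lcs}}(G)$.
   Context: All graphs are finite and simple. For a graph $G=(V,E)$ with $k=\chi(G)$, a proper $k$-colouring is a map $c:V\to[k]$ with $c(u)\neq c(v)$ for every edge $uv$. A set $S\subseteq V$ is a determining set for $(G,c)$ if there is no proper $k$-colouring $c'\neq c$ with $c'(s)=c(s)$ for all $s\in S$; a critical set is an inclusion-minimal determining set. $\mathrm{scs}(G,c)$ and $\mathrm{lcs}(G,c)$ are the sizes of a smallest resp. largest critical set for $(G,c)$. $\mathrm{sn}(G)=\min_c\mathrm{scs}(G,c)$ and $\underline{\mathrm{lcs}}(G)=\min_c\mathrm{lcs}(G,c)$, minima over all proper $\chi(G)$-colourings $c$. *)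

From mathcomp Require Import all_boot all_order.
Set Implicit Arguments. Unset Strict Implicit. Unset Printing Implicit Defensive.

Section Graphs.
Variable T : finType.
Variable e : rel T.

Definition simple_graph : Prop := symmetric e /\ irreflexive e.

Definition connected_graph : Prop :=
  0 < #|T| /\ forall x y : T, connect e x y.

Definition proper_col (k : nat) (c : {ffun T -> 'I_k}) : bool :=
  [forall x, forall y, e x y ==> (c x != c y)].

(* chromatic number: least k admitting a proper k-colouring.
   (The disjunct #|T| <= k only guarantees termination of ex_minn; for a
    simple graph #|T| colours always suffice, so it does not change the value.) *)
Definition chi_pred (k : nat) : bool :=
  [exists c : {ffun T -> 'I_k}, proper_col c] || (#|T| <= k).

Lemma chi_pred_ex : exists k, chi_pred k.
Proof. by exists #|T|; rewrite /chi_pred leqnn orbT. Qed.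

Definition chi : nat := ex_minn chi_pred_ex.

Definition determining (k : nat) (c : {ffun T -> 'I_k}) (S : {set T}) : bool :=
  [forall c' : {ffun T -> 'I_k},
     (proper_col c' && [forall s in S, c' s == c s]) ==> (c' == c)].

Definition critical (k : nat) (c : {ffun T -> 'I_k}) (S : {set T}) : bool :=
  determining c S && [forall S' : {set T}, (S' \proper S) ==> ~~ determining c S'].

(* smallest / largest size of a critical set (critical sets always exist,
   e.g. inside V, and have size <= #|T|, so the defaults are never reached) *)
Definition scs (k : nat) (c : {ffun T -> 'I_k}) : nat :=
  \big[minn/#|T|]_(S : {set T} | critical c S) #|S|.
Definition lcs (k : nat) (c : {ffun T -> 'I_k}) : nat :=
  \max_(S : {set T} | critical c S) #|S|.

Definition sn : nat :=
  \big[minn/#|T|]_(c : {ffun T -> 'I_chi} | proper_col c) scs c.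
Definition lcs_min : nat :=
  \big[minn/#|T|]_(c : {ffun T -> 'I_chi} | proper_col c) lcs c.

End Graphs.

(* H (on T1, edges e1) is (isomorphic to) a proper subgraph of G (on T2, edges e2)
   via the injective vertex map f *)
Definition proper_subgraph (T1 T2 : finType) (e1 : rel T1) (e2 : rel T2)
  (f : T1 -> T2) : Prop :=
  injective f /\ (forall x y, e1 x y -> e2 (f x) (f y)) /\
  (#|T1| < #|T2| \/ exists x y, e2 (f x) (f y) /\ ~~ e1 x y).

(** The witnesses are a triangle [H] and the same triangle [G] with [3N + 1]
    pendant vertices hanging off one corner; both are 3-chromatic.  A pendant
    vertex of a 3-chromatic graph can always be recoloured with the colour
    used neither by itself nor by its unique neighbour, so it lies in every
    determining set of every proper 3-colouring.  Hence every critical set of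
    [G] has at least [3N + 1] elements, while critical sets of [H] have at most
    three. *)
From mathcomp Require Import all_boot all_order.
From mathcomp Require Import zify.
Set Implicit Arguments. Unset Strict Implicit. Unset Printing Implicit Defensive.

Lemma leq_bigmin_idx (I : finType) (P : pred I) (F : I -> nat) d :
  \big[minn/d]_(i | P i) F i <= d.
Proof.
by apply: (big_rec (fun x => x <= d)) => // i x _ xd; rewrite geq_min xd orbT.
Qed.

Lemma bigmin_geq (I : finType) (P : pred I) (F : I -> nat) m d :
  m <= d -> (forall i, P i -> m <= F i) -> m <= \big[minn/d]_(i | P i) F i.
Proof.
move=> md mF; apply: (big_ind (fun x => m <= x)) => // x y mx my.
by rewrite leq_min mx my.
Qed.

Section ColouringTheory.

Variables (T : finType) (e : rel T).

Lemma chi_min k (c : {ffun T -> 'I_k}) : proper_col e c -> chi e <= k.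
Proof.
move=> ck; rewrite /chi; case: ex_minnP => m _; apply.
by rewrite /chi_pred; apply/orP; left; apply/existsP; exists c.
Qed.

Lemma chi_triangle (a b c : T) :
  irreflexive e -> e a b -> e b c -> e c a -> 2 < chi e.
Proof.
move=> irr ab bc ca.
have neq x y : e x y -> x != y by apply: contraTneq => ->; rewrite irr.
rewrite /chi; case: ex_minnP => m + _; case/orP => [/existsP [col /forallP pc] | Tm].
  have ncol x y : e x y -> col x != col y.
    by move=> xy; exact: (implyP (forallP (pc x) y)).
  rewrite -[m]card_ord; apply/card_gt2P; exists (col a), (col b), (col c).
  by split; [rewrite !inE | rewrite !ncol].
apply: leq_trans Tm; apply/card_gt2P; exists a, b, c.
by split; [rewrite !inE | rewrite !neq].
Qed.

Lemma connected_graph_star (u : T) :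
  symmetric e -> (forall x, x != u -> e u x) -> connected_graph e.
Proof.
move=> sym star; split; first by apply/card_gt0P; exists u.
have to_u x : connect e u x.
  by case: (eqVneq x u) => [-> | xu]; [exact: connect0 | exact/connect1/star].
move=> x y; apply: connect_trans (to_u y).
by rewrite sym_connect_sym.
Qed.

Lemma exists_critical k (c : {ffun T -> 'I_k}) : exists S, critical e c S.
Proof.
have detT : determining e c setT.
  apply/forallP => c'; apply/implyP => /andP [_ /forall_inP agree].
  by apply/eqP/ffunP => x; apply/eqP/agree; rewrite inE.
have [S /minsetP [detS minS] _] := minset_exists detT.
exists S; rewrite /critical detS; apply/forall_inP => S' ltS'S.
apply/negP => detS'; have eqS := minS S' detS' (proper_sub ltS'S).
by rewrite eqS properxx in ltS'S.
Qed.

Lemma mem_determining k (c : {ffun T -> 'I_k}) S (p : T) (z : 'I_k) :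
  simple_graph e -> proper_col e c -> determining e c S ->
  z != c p -> (forall y, e p y -> c y != z) -> p \in S.
Proof.
move=> [sym irr] pc detS zp free; apply: contraLR detS => pS.
pose c' := [ffun x => if x == p then z else c x].
have pc' : proper_col e c'.
  apply/forallP => x; apply/forallP => y; apply/implyP => xy; rewrite !ffunE.
  case: (eqVneq x p) => [xp | xp]; case: (eqVneq y p) => [yp | yp].
  - by rewrite xp yp irr in xy.
  - by rewrite eq_sym free // -xp.
  - by rewrite free // sym -yp.
  - exact: (implyP (forallP (forallP pc x) y)).
apply/forallP => /(_ c'); rewrite pc' /= => /implyP agree.
have /eqP/ffunP/(_ p) : c' == c.
  apply: agree; apply/forall_inP => s sS; rewrite ffunE.
  by case: (eqVneq s p) => // sp; rewrite -sp sS in pS.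
by rewrite ffunE eqxx => /eqP; rewrite (negbTE zp).
Qed.

Lemma mem_determining_pendant k (c : {ffun T -> 'I_k}) S (p q : T) :
  simple_graph e -> 2 < k -> proper_col e c -> determining e c S ->
  (forall y, e p y -> y = q) -> p \in S.
Proof.
move=> simple k3 pc detS pendant.
have [z] : exists z, z \in ~: [set c p; c q].
  apply/set0Pn; rewrite -card_gt0 -(leq_add2l #|[set c p; c q]|) cardsC card_ord.
  by rewrite cards2 addn1; apply: leq_trans k3; case: (_ != _).
rewrite !inE negb_or => /andP [zp zq].
by apply: mem_determining simple pc detS zp _ => y /pendant ->; rewrite eq_sym.
Qed.

Variable P : {set T}.
Hypothesis forced : forall (c : {ffun T -> 'I_(chi e)}) S,
  proper_col e c -> determining e c S -> P \subset S.

Lemma sn_forced : #|P| <= sn e.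
Proof.
apply: bigmin_geq (max_card _) _ => c pc; apply: bigmin_geq (max_card _) _.
by move=> S /andP [detS _]; exact/subset_leq_card/(forced pc detS).
Qed.

Lemma lcs_min_forced : #|P| <= lcs_min e.
Proof.
apply: bigmin_geq (max_card _) _ => c pc.
have [S critS] := exists_critical c.
apply: leq_trans (leq_bigmax_cond _ critS).
by case/andP: critS => detS _; exact/subset_leq_card/(forced pc detS).
Qed.

End ColouringTheory.

Lemma sn_leq_card (T : finType) (e : rel T) : sn e <= #|T|.
Proof. exact: leq_bigmin_idx. Qed.

Lemma lcs_min_leq_card (T : finType) (e : rel T) : lcs_min e <= #|T|.
Proof. exact: leq_bigmin_idx. Qed.

(* Vertices 0, 1, 2 span a triangle; 3, ..., n + 2 are pendant at 0. *)
Definition pendant_triangle (n : nat) : rel 'I_n.+3 := fun x y =>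
  ((x : nat) != y) && [|| (x < 3) && (y < 3), x == 0 :> nat | y == 0 :> nat].

Arguments pendant_triangle : clear implicits.

Section PendantTriangle.

Variable n : nat.
Notation G := (pendant_triangle n).

Lemma pendant_triangle_simple : simple_graph G.
Proof.
split=> [x y | x]; last by rewrite /G eqxx.
by rewrite /G eq_sym; congr (_ && _); case: (x < 3); case: (y < 3); rewrite //= orbC.
Qed.

Lemma pendant_triangle_connected : connected_graph G.
Proof.
apply: connected_graph_star (ord0) (proj1 pendant_triangle_simple) _ => x.
by rewrite -val_eqE /G /= eq_sym => ->; rewrite orbT.
Qed.

Lemma chi_pendant_triangle : chi G = 3.
Proof.
apply/eqP; rewrite eqn_leq; apply/andP; split.
  apply: (@chi_min _ _ _ [ffun x : 'I_n.+3 => inord (minn x 2) : 'I_3]).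
  apply/forallP => x; apply/forallP => y; apply/implyP => /andP [xy adj].
  by rewrite !ffunE -val_eqE /= !inordK; lia.
have [_ irr] := pendant_triangle_simple.
by apply: (@chi_triangle _ _ (inord 0) (inord 1) (inord 2)); rewrite // /G /= !inordK.
Qed.

Lemma pendant_triangle_pendant (p y : 'I_n.+3) : 2 < p -> G p y -> y = ord0.
Proof.
move=> p3 /andP [_]; rewrite ltnNge p3 /= => /orP [/eqP p0 | /eqP y0].
  by rewrite p0 in p3.
exact: val_inj.
Qed.

Lemma pendant_triangle_forced (c : {ffun 'I_n.+3 -> 'I_(chi G)}) S :
  proper_col G c -> determining G c S -> [set rshift 3 i | i : 'I_n] \subset S.
Proof.
move=> pc detS; apply/subsetP => _ /imsetP [i _ ->].
apply: (mem_determining_pendant (q := ord0) pendant_triangle_simple _ pc detS).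
  by rewrite chi_pendant_triangle.
by move=> y; apply: pendant_triangle_pendant; rewrite /= leq_addr.
Qed.

Lemma sn_pendant_triangle : n <= sn G.
Proof.
have := sn_forced pendant_triangle_forced.
by rewrite card_imset ?card_ord //; exact: (@rshift_inj 3 n).
Qed.

Lemma lcs_min_pendant_triangle : n <= lcs_min G.
Proof.
have := lcs_min_forced pendant_triangle_forced.
by rewrite card_imset ?card_ord //; exact: (@rshift_inj 3 n).
Qed.

End PendantTriangle.

Lemma pendant_triangle_proper_subgraph m n (lt_mn : m < n) :
  proper_subgraph (pendant_triangle m) (pendant_triangle n)
                  (widen_ord (ltnW lt_mn : m.+3 <= n.+3)).
Proof.
split; first by move=> x y /(congr1 val) eq_val; apply: val_inj.
by split=> //; left; rewrite !card_ord.
Qed.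

Lemma pendant_triangles_separate (g : forall T : finType, rel T -> nat) :
  g _ (pendant_triangle 0) <= 3 -> (forall n, n <= g _ (pendant_triangle n)) ->
  forall N, exists (T1 T2 : finType) (e1 : rel T1) (e2 : rel T2) (f : T1 -> T2),
    [/\ simple_graph e1, simple_graph e2, connected_graph e1,
        connected_graph e2 & proper_subgraph e1 e2 f] /\
    chi e1 = chi e2 /\ N * g _ e1 < g _ e2.
Proof.
move=> g_small g_large N.
exists _, _, (pendant_triangle 0), (pendant_triangle (3 * N).+1).
exists (widen_ord (ltnW (ltn0Sn (3 * N)) : 3 <= (3 * N).+4)); split.
  split; do ?[exact: pendant_triangle_simple | exact: pendant_triangle_connected].
  exact: pendant_triangle_proper_subgraph.
rewrite !chi_pendant_triangle; split=> //.
by apply: leq_trans (g_large _); rewrite ltnS mulnC leq_mul2r g_small orbT.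
Qed.

Theorem proposition6 :
  (forall N : nat, 1 < N ->
    exists (T1 T2 : finType) (e1 : rel T1) (e2 : rel T2) (f : T1 -> T2),
      [/\ simple_graph e1, simple_graph e2, connected_graph e1,
          connected_graph e2 & proper_subgraph e1 e2 f] /\
      chi e1 = chi e2 /\ N * sn e1 < sn e2) /\
  (forall N : nat, 1 < N ->
    exists (T1 T2 : finType) (e1 : rel T1) (e2 : rel T2) (f : T1 -> T2),
      [/\ simple_graph e1, simple_graph e2, connected_graph e1,
          connected_graph e2 & proper_subgraph e1 e2 f] /\
      chi e1 = chi e2 /\ N * lcs_min e1 < lcs_min e2).
Proof.
split=> N _; apply: pendant_triangles_separate.
- by have := sn_leq_card (pendant_triangle 0); rewrite card_ord.
- exact: sn_pendant_triangle.
- by have := lcs_min_leq_card (pendant_triangle 0); rewrite card_ord.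
- exact: lcs_min_pendant_triangle.
Qed.
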